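(* Let $\alpha>1$. Let $\mathcal{A}:\mathcal{D}\mapsto(\mathcal{A}_1(\mathcal{D}),\mathcal{A}_2(\mathcal{D}))\in\mathcal{Z}_1\times\mathcal{Z}_2$ be a randomized algorithm whose first output satisfies $D_\alpha(\mathcal{A}_1(\mathcal{D})\,\|\,\mathcal{A}_1(\mathcal{D}'))\le\varepsilon_1$ for all adjacent datasets $\mathcal{D},\mathcal{D}'$ (the two outputs $\mathcal{A}_1(\mathcal{D}),\mathcal{A}_2(\mathcal{D})$ may be dependent). Let $\mathcal{B}:\mathcal{Z}_1\times\mathcal{Z}_2\to\mathcal{W}$ be a randomized algorithm satisfying $\sup_{\mathbf{z}_1,\mathbf{z}_2,\mathbf{z}_2'}D_\alpha(\mathcal{B}(\mathbf{z}_1,\mathbf{z}_2)\,\|\,\mathcal{B}(\mathbf{z}_1,\mathbf{z}_2'))\le\varepsilon_2$. Assume the randomness used by $\mathcal{A}$ and $\mathcal{B}$ is independent (and that all relevant densities exist). Then for all adjacent $\mathcal{D},\mathcal{D}'$, $$D_\alpha\big((\mathcal{A}_1(\mathcal{D}),\mathcal{B}(\mathcal{A}(\mathcal{D})))\,\big\|\,(\mathcal{A}_1(\mathcal{D}'),\mathcal{B}(\mathcal{A}(\mathcal{D}')))\big)\le\varepsilon_1+\varepsilon_2,$$ i.e. the pair jointly satisfies $(\alpha,\varepsilon_1+\varepsilon_2)$-Rényi DP.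
   Context: For $\alpha>1$ the Rényi divergence between random variables $X\sim P$, $Y\sim Q$ is $D_\alpha(X\|Y)=\frac{1}{\alpha-1}\log\mathbb{E}_{x\sim Q}[(P(x)/Q(x))^\alpha]$. An algorithm is $(\alpha,\varepsilon)$-Rényi DP if its output distributions on any two adjacent datasets have Rényi divergence of order $\alpha$ at most $\varepsilon$; here ''adjacent'' refers to an arbitrary fixed symmetric adjacency relation on datasets. *)

From HB Require Import structures.
From mathcomp Require Import all_boot all_order all_algebra.
From mathcomp Require Import all_classical all_reals all_analysis.
Set Implicit Arguments. Unset Strict Implicit. Unset Printing Implicit Defensive.
Import Order.TTheory GRing.Theory Num.Theory.
Import numFieldNormedType.Exports.
Local Open Scope classical_set_scope.
Local Open Scope ring_scope.

Section Renyi.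
Context (R : realType) (d : measure_display) (T : measurableType d).

Definition is_density (mu : {measure set T -> \bar R}) (p : T -> R) : Prop :=
  [/\ measurable_fun setT p, (forall x, 0 <= p x) &
      (\int[mu]_x (p x)%:E = 1)%E].

(* Rényi divergence of order [a] (a > 1) between the distributions with
   densities [p] (for P) and [q] (for Q) w.r.t. [mu]:
     D_a(P||Q) = 1/(a-1) * log E_{x~Q}[(p x / q x)^a]
               = 1/(a-1) * log \int p^a q^(1-a) dmu,
   and D_a(P||Q) = +oo when P is not absolutely continuous w.r.t. Q
   (or the integral is infinite). *)
Definition renyi_div (mu : {measure set T -> \bar R}) (a : R) (p q : T -> R)
    : \bar R :=
  if `[< {ae mu, forall x, q x = 0 -> p x = 0} >] then
    let I := (\int[mu]_x (p x `^ a * q x `^ (1 - a))%:E)%E in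
    if I == +oo%E then +oo%E else ((a - 1)^-1 * ln (fine I))%:E
  else +oo%E.

End Renyi.

Section Composition.
Context (R : realType) (Dat : Type)
  (d1 d2 dw : measure_display)
  (Z1 : measurableType d1) (Z2 : measurableType d2) (W : measurableType dw)
  (mu2 : {measure set Z2 -> \bar R}).

(* density of the first output A_1(D): marginal of the joint density of
   A(D) = (A_1(D), A_2(D)) *)
Definition marginal1 (pA : Dat -> Z1 * Z2 -> R) (D : Dat) : Z1 -> R :=
  fun z1 => fine (\int[mu2]_z2 (pA D (z1, z2))%:E)%E.

(* density of (A_1(D), B(A(D))), where B uses randomness independent of A:
   (z1, w) |-> \int p_D(z1, z2) q_{(z1,z2)}(w) dmu2(z2) *)
Definition out_density (pA : Dat -> Z1 * Z2 -> R) (qB : Z1 -> Z2 -> W -> R)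
    (D : Dat) : Z1 * W -> R :=
  fun zw => fine (\int[mu2]_z2 (pA D (zw.1, z2) * qB zw.1 z2 zw.2)%:E)%E.

End Composition.

From HB Require Import structures.
From mathcomp Require Import all_boot all_order all_algebra.
From mathcomp Require Import all_classical all_reals all_analysis.
From mathcomp Require Import measurable_realfun.
From mathcomp Require Import ring lra.
Set Implicit Arguments. Unset Strict Implicit. Unset Printing Implicit Defensive.
Import Order.TTheory GRing.Theory Num.Theory.
Import numFieldNormedType.Exports.
Local Open Scope classical_set_scope.
Local Open Scope ring_scope.

(* Fix the first output z1 of A.  The output densities of (A_1, B o A) at (z1, .)
   are the mixtures P = \int p_D(z1, z) q_(z1,z) dz and Q = \int p_D'(z1, z) q_(z1,z) dz
   of the densities of B, with masses m = A_1(D)(z1) and m' = A_1(D')(z1).  The map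
   (x, y) |-> x^a y^(1-a) is jointly convex and positively homogeneous, so Jensen's
   inequality for the weights p_D(z1, z) p_D'(z1, z') / (m m') bounds
   \int P^a Q^(1-a) dnu by m^a m'^(1-a) times an average over (z, z') of
   \int q_(z1,z)^a q_(z1,z')^(1-a) dnu, which is at most exp((a-1) eps2).  Integrating
   over z1 leaves \int m^a m'^(1-a) <= exp((a-1) eps1).  Both Jensen's inequality
   and the absolute continuity of P with respect to Q come from the supporting line
   of t |-> t^a at a suitable point c. *)

Section renyi_pow.
Context (R : realType).
Implicit Types (a x y c s m : R).

Definition renyi_pow a x y : R := x `^ a * y `^ (1 - a).

(* At [y = 0 < x] the integrand [renyi_pow] of [renyi_div] takes the junk value
   [0] (as [0 `^ (1 - a) = 0]); [erenyi_pow] has the true value [+oo] there. *)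
Definition erenyi_pow a x y : \bar R :=
  if (y == 0) && (0 < x) then +oo%E else (renyi_pow a x y)%:E.

Lemma renyi_pow_ge0 a x y : 0 <= renyi_pow a x y.
Proof. by rewrite mulr_ge0 // powR_ge0. Qed.

Lemma erenyi_pow_ge0 a x y : (0 <= erenyi_pow a x y)%E.
Proof. by rewrite /erenyi_pow; case: ifP => _ //; rewrite lee_fin renyi_pow_ge0. Qed.

Lemma renyi_pow0l a y : a != 0 -> renyi_pow a 0 y = 0.
Proof. by move=> a0; rewrite /renyi_pow powR0 ?mul0r. Qed.

Lemma renyi_pow0r a x : a != 1 -> renyi_pow a x 0 = 0.
Proof. by move=> a1; rewrite /renyi_pow powR0 ?mulr0 // subr_eq0 eq_sym. Qed.

Lemma renyi_powE a x y : 0 <= x -> 0 < y -> renyi_pow a x y = (x / y) `^ a * y.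
Proof.
move=> x0 y0; rewrite /renyi_pow; set t := x / y.
have -> : x = t * y by rewrite /t divfK ?gt_eqF.
have t0 : 0 <= t by rewrite divr_ge0 // ltW.
rewrite powRM // ?ltW // -mulrA; congr (_ * _).
rewrite -powRD; last by apply/implyP => _; rewrite gt_eqF.
by rewrite addrC subrK powRr1 // ltW.
Qed.

Lemma renyi_powZ a x y m m' : 0 <= x -> 0 <= y -> 0 < m -> 0 < m' ->
  renyi_pow a (x / m') (y / m) = m' `^ (- a) * m `^ (a - 1) * renyi_pow a x y.
Proof.
move=> x0 y0 m0 m'0.
have m'i : 0 <= m'^-1 by rewrite invr_ge0 ltW.
have mi : 0 <= m^-1 by rewrite invr_ge0 ltW.
rewrite /renyi_pow !powRM //.
have -> : m'^-1 `^ a = m' `^ (- a).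
  by rewrite powRN -powR_inv1 ?ltW // -powRrM mulN1r powRN.
have -> : m^-1 `^ (1 - a) = m `^ (a - 1).
  by rewrite -powR_inv1 ?ltW // -powRrM mulN1r opprB.
ring.
Qed.

(* [s `^ a = s * expR ((a - 1) * ln s)], then [expR u >= 1 + u] and
   [s * ln s >= s - 1]. *)
Lemma powR_ge_bernoulli a s : 1 <= a -> 0 <= s -> 1 + a * (s - 1) <= s `^ a.
Proof.
move=> a1 s0; have [->|sn0] := eqVneq s 0.
  by rewrite powR0 ?gt_eqF ?(lt_le_trans ltr01) // sub0r mulrN1 subr_le0.
have s_gt0 : 0 < s by rewrite lt_neqAle eq_sym sn0.
have exp_ge : 1 + (a - 1) * ln s <= s `^ (a - 1).
  by rewrite /powR (negbTE sn0) expR_ge1Dx.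
have ln_le : - ln s <= s^-1 - 1.
  have sV_gt0 : 0 < s^-1 by rewrite invr_gt0.
  have := @le_ln1Dx R (s^-1 - 1).
  have -> : 1 + (s^-1 - 1) = s^-1 by ring.
  by rewrite lnV ?posrE //; apply; lra.
have ln_ge : s - 1 <= s * ln s.
  have := ler_wpM2l s0 ln_le.
  rewrite mulrBr mulfV ?gt_eqF // mulr1 mulrN; lra.
have -> : s `^ a = s * s `^ (a - 1) by rewrite mulr_powRB1 // (lt_le_trans ltr01).
have := ler_wpM2l s0 exp_ge.
have a10 : 0 <= a - 1 by rewrite subr_ge0.
have := ler_wpM2l a10 ln_ge; nra.
Qed.

(* Supporting line of the convex function [t |-> t `^ a] at [c], in homogeneous form. *)
Lemma renyi_pow_tangent a x y c : 1 < a -> 0 <= x -> 0 < y -> 0 <= c ->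
  c `^ a * y + a * c `^ (a - 1) * x <= renyi_pow a x y + a * c `^ a * y.
Proof.
move=> a1 x0 y0 c0; rewrite renyi_powE //.
set t := x / y; have t0 : 0 <= t by rewrite divr_ge0 // ltW.
have -> : x = t * y by rewrite /t divfK ?gt_eqF.
have [->|cn0] := eqVneq c 0.
  rewrite !powR0 ?gt_eqF ?subr_gt0 ?(lt_trans ltr01) //.
  by rewrite !(mulr0, mul0r, add0r, addr0) mulr_ge0 ?powR_ge0 ?ltW.
have c_gt0 : 0 < c by rewrite lt_neqAle eq_sym cn0.
set s := t / c; have s0 : 0 <= s by rewrite divr_ge0.
have -> : t = s * c by rewrite /s divfK.
have e : c `^ (a - 1) * (s * c * y) = c `^ a * s * y.
  by rewrite -(mulr_powRB1 c0 (lt_trans ltr01 a1)); ring.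
rewrite powRM // -mulrA e.
have := ler_wpM2l (mulr_ge0 (powR_ge0 c a) (ltW y0)) (powR_ge_bernoulli (ltW a1) s0).
move: (c `^ a) (s `^ a) => C S; nra.
Qed.

Lemma erenyi_pow_tangent a x y c m m' : 1 < a -> 0 <= x -> 0 <= y -> 0 <= c ->
  0 < m -> 0 < m' ->
  ((c `^ a * (y / m) + a * c `^ (a - 1) * (x / m'))%:E <=
   (m' `^ (- a) * m `^ (a - 1))%:E * erenyi_pow a x y + (a * c `^ a * (y / m))%:E)%E.
Proof.
move=> a1 x0 y0 c0 m0 m'0.
have k0 : 0 < m' `^ (- a) * m `^ (a - 1) by rewrite mulr_gt0 ?powR_gt0.
rewrite /erenyi_pow; case: ifPn => [_|].
  by rewrite gt0_muley ?lte_fin // addye ?leey.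
have tangent : 0 < y ->
    ((c `^ a * (y / m) + a * c `^ (a - 1) * (x / m'))%:E <=
     (m' `^ (- a) * m `^ (a - 1))%:E * (renyi_pow a x y)%:E +
     (a * c `^ a * (y / m))%:E)%E.
  move=> y_gt0; rewrite -EFinM -EFinD lee_fin -renyi_powZ //.
  apply: renyi_pow_tangent => //; [exact: divr_ge0 (ltW m'0)|exact: divr_gt0].
rewrite negb_and -real_leNgt ?num_real // => /orP[yn0|x_le0].
  by apply: tangent; rewrite lt_neqAle eq_sym yn0.
have [y_eq0|yn0] := eqVneq y 0.
  have -> : x = 0 by apply/le_anti; rewrite x_le0.
  by rewrite y_eq0 renyi_pow0l ?gt_eqF ?(lt_trans ltr01) // !(mul0r, mulr0, addr0) mule0.
by apply: tangent; rewrite lt_neqAle eq_sym yn0.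
Qed.

End renyi_pow.
Arguments renyi_pow {R}.
Arguments erenyi_pow {R}.

Section ge0_integral_real.
Context (R : realType) d (T : measurableType d) (mu : {measure set T -> \bar R}).
Local Open Scope ereal_scope.

Lemma ge0_integralZl_real (u : T -> R) (r : R) : measurable_fun setT u ->
  (forall x, 0 <= u x)%R -> (0 <= r)%R ->
  \int[mu]_x (r * u x)%:E = r%:E * \int[mu]_x (u x)%:E.
Proof.
move=> mfu u0 r0; under eq_integral do rewrite EFinM.
by rewrite ge0_integralZl_EFin //; [move=> x _; rewrite lee_fin|exact/measurable_EFinP].
Qed.

Lemma ge0_integral_lincomb (u v : T -> R) (r s : R) :
  measurable_fun setT u -> measurable_fun setT v ->
  (forall x, 0 <= u x)%R -> (forall x, 0 <= v x)%R -> (0 <= r)%R -> (0 <= s)%R ->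
  \int[mu]_x (r * u x + s * v x)%:E =
  r%:E * \int[mu]_x (u x)%:E + s%:E * \int[mu]_x (v x)%:E.
Proof.
move=> mfu mfv u0 v0 r0 s0; under eq_integral do rewrite EFinD.
rewrite ge0_integralD //; last 4 first.
- by move=> x _; rewrite lee_fin mulr_ge0.
- by apply/measurable_EFinP; apply: measurable_funM => //; exact: measurable_cst.
- by move=> x _; rewrite lee_fin mulr_ge0.
- by apply/measurable_EFinP; apply: measurable_funM => //; exact: measurable_cst.
by rewrite !ge0_integralZl_real.
Qed.

Lemma ae_fin_num_integral_le (h : T -> \bar R) (r : R) : measurable_fun setT h ->
  (forall x, 0 <= h x) -> \int[mu]_x h x <= r%:E ->
  {ae mu, forall x, h x \is a fin_num}.
Proof.
move=> mh h0 hr.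
have hi : mu.-integrable setT h.
  apply/integrableP; split => //.
  rewrite (eq_integral h); last by move=> x _; rewrite gee0_abs.
  exact: le_lt_trans hr (ltry _).
by apply: filterS (integrable_ae measurableT hi) => x; apply.
Qed.

Lemma ge0_integral_eq0_mul (u v : T -> R) :
  measurable_fun setT u -> measurable_fun setT v -> (forall x, 0 <= u x)%R ->
  \int[mu]_x (u x)%:E = 0 -> \int[mu]_x (u x * v x)%:E = 0.
Proof.
move=> mfu mfv u0 Iu0.
have mEu : measurable_fun setT (fun x => (u x)%:E) by exact/measurable_EFinP.
have /(ae_eq_integral_abs mu measurableT mEu) u_ae0 : \int[mu]_x `|(u x)%:E| = 0.
  by rewrite (eq_integral (fun x => (u x)%:E)) // => x _; rewrite gee0_abs // lee_fin.
rewrite (ae_eq_integral (cst 0)) ?integral0 //.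
  by apply/measurable_EFinP; exact: measurable_funM.
apply: filterS u_ae0 => x /(_ I) /(congr1 fine) /= ux0 _.
by rewrite /cst ux0 mul0r.
Qed.

Lemma density_inhabited (p : T -> R) : is_density mu p -> inhabited T.
Proof.
move=> [_ _ Ip1]; apply: contrapT => T0.
have T_empty : [set: T] = set0.
  by apply/seteqP; split => x // _; exact: T0 (inhabits x).
by move: Ip1; rewrite T_empty integral_set0 => -[] /eqP; rewrite eq_sym oner_eq0.
Qed.

End ge0_integral_real.

Section renyi_div.
Context (R : realType) d (T : measurableType d) (mu : {measure set T -> \bar R}).
Local Open Scope ereal_scope.

Lemma measurable_renyi_pow (a : R) (u v : T -> R) : measurable_fun setT u ->
  measurable_fun setT v -> measurable_fun setT (fun x => renyi_pow a (u x) (v x)).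
Proof.
move=> mfu mfv; apply: measurable_funM.
  exact: (measurableT_comp (measurable_powR _) mfu).
exact: (measurableT_comp (measurable_powR _) mfv).
Qed.

Lemma measurable_erenyi_pow (a : R) (u v : T -> R) : measurable_fun setT u ->
  measurable_fun setT v -> measurable_fun setT (fun x => erenyi_pow a (u x) (v x)).
Proof.
move=> mfu mfv; apply: measurable_fun_ifT.
- apply: measurable_and.
    by apply: measurable_fun_eqr => //; exact: measurable_cst.
  by apply: measurable_fun_ltr => //; exact: measurable_cst.
- exact: measurable_cst.
- by apply: measurableT_comp => //; exact: measurable_renyi_pow.
Qed.

Lemma integral_renyi_pow_ge0 (a : R) (p q : T -> R) :
  0 <= \int[mu]_x (renyi_pow a (p x) (q x))%:E.
Proof. by apply: integral_ge0 => x _; rewrite lee_fin renyi_pow_ge0. Qed.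

Lemma renyi_div_le_expR (a e : R) (p q : T -> R) : (1 < a)%R ->
  renyi_div mu a p q <= e%:E ->
  {ae mu, forall x, q x = 0%R -> p x = 0%R} /\
  \int[mu]_x (renyi_pow a (p x) (q x))%:E <= (expR ((a - 1) * e))%:E.
Proof.
move=> a1; rewrite /renyi_div; case: asboolP => [ac|_]; last by rewrite leye_eq.
set I := \int[mu]_x _.
case: eqP => [_|Ioo]; first by rewrite leye_eq.
rewrite lee_fin => ln_le; split => //.
have I_fin : I \is a fin_num.
  by rewrite ge0_fin_numE ?integral_renyi_pow_ge0 // ltey; apply/eqP.
rewrite -(fineK I_fin) lee_fin.
have [I_gt0|I_le0] := ltP 0%R (fine I); last exact: le_trans I_le0 (expR_ge0 _).
rewrite -ler_ln ?posrE ?expR_gt0 // expRK -ler_pdivrMl //.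
by rewrite subr_gt0.
Qed.

Lemma integral_erenyi_pow_le (a e : R) (p q : T -> R) : (1 < a)%R ->
  measurable_fun setT p -> measurable_fun setT q ->
  renyi_div mu a p q <= e%:E ->
  \int[mu]_x erenyi_pow a (p x) (q x) <= (expR ((a - 1) * e))%:E.
Proof.
move=> a1 mp mq /(renyi_div_le_expR a1) [ac I_le]; apply: le_trans I_le.
apply: ae_ge0_le_integral => //.
- by move=> x _; exact: erenyi_pow_ge0.
- exact: measurable_erenyi_pow.
- by move=> x _; rewrite lee_fin renyi_pow_ge0.
- by apply/measurable_EFinP; exact: measurable_renyi_pow.
apply: filterS ac => x pq0 _; rewrite /erenyi_pow.
case: ifPn => [/andP[/eqP q0 p_gt0]|_] //.
by move: p_gt0; rewrite (pq0 q0) ltxx.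
Qed.

Lemma le_renyi_div (a e : R) (p q : T -> R) : (1 < a)%R -> (0 <= e)%R ->
  {ae mu, forall x, q x = 0%R -> p x = 0%R} ->
  \int[mu]_x (renyi_pow a (p x) (q x))%:E <= (expR ((a - 1) * e))%:E ->
  renyi_div mu a p q <= e%:E.
Proof.
move=> a1 e0 ac I_le; rewrite /renyi_div asboolT //.
set I := \int[mu]_x _.
have I_fin : I \is a fin_num.
  by rewrite ge0_fin_numE ?integral_renyi_pow_ge0 // (le_lt_trans I_le) ?ltey.
rewrite ifF; last by apply/negbTE; rewrite -ltey -ge0_fin_numE ?integral_renyi_pow_ge0.
rewrite lee_fin ler_pdivrMl ?subr_gt0 //.
have [I_gt0|I_le0] := ltP 0%R (fine I).
  by rewrite -ler_expR lnK ?posrE // -lee_fin fineK.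
by rewrite ln0 // mulr_ge0 // subr_ge0 ltW.
Qed.

(* Integrate the supporting line at [c = 1]: [q + a p <= p^a q^(1-a) + a q]. *)
Lemma integral_renyi_pow_ge1 (a : R) (p q : T -> R) : (1 < a)%R ->
  is_density mu p -> is_density mu q -> {ae mu, forall x, q x = 0%R -> p x = 0%R} ->
  1 <= \int[mu]_x (renyi_pow a (p x) (q x))%:E.
Proof.
move=> a1 [mp p0 ip] [mq q0 iq] ac.
have a0 : (0 <= a)%R by rewrite ltW // (lt_trans ltr01).
have mEp : measurable_fun setT (fun x => (p x)%:E) by exact/measurable_EFinP.
have mEq : measurable_fun setT (fun x => (q x)%:E) by exact/measurable_EFinP.
have mEpq : measurable_fun setT (fun x => (renyi_pow a (p x) (q x))%:E).
  by apply/measurable_EFinP; exact: measurable_renyi_pow.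
have Ep0 x : setT x -> 0 <= (p x)%:E by rewrite lee_fin.
have Eq0 x : setT x -> 0 <= (q x)%:E by rewrite lee_fin.
have Epq0 x : setT x -> 0 <= (renyi_pow a (p x) (q x))%:E.
  by rewrite lee_fin renyi_pow_ge0.
have maEp : measurable_fun setT (fun x => a%:E * (p x)%:E).
  by apply: emeasurable_funM => //; exact: measurable_cst.
have maEq : measurable_fun setT (fun x => a%:E * (q x)%:E).
  by apply: emeasurable_funM => //; exact: measurable_cst.
have : \int[mu]_x ((q x)%:E + a%:E * (p x)%:E) <=
       \int[mu]_x ((renyi_pow a (p x) (q x))%:E + a%:E * (q x)%:E).
  apply: ae_ge0_le_integral => //.
  - by move=> x _; rewrite adde_ge0 ?mule_ge0 ?lee_fin.
  - exact: emeasurable_funD.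
  - by move=> x _; rewrite adde_ge0 ?mule_ge0 ?lee_fin ?renyi_pow_ge0.
  - exact: emeasurable_funD.
  apply: filterS ac => x pq0 _; rewrite -!EFinM -!EFinD lee_fin.
  have [qx0|qxn0] := eqVneq (q x) 0%R.
    by rewrite qx0 (pq0 qx0) !(mulr0, addr0) renyi_pow_ge0.
  have qx_gt0 : (0 < q x)%R by rewrite lt_neqAle eq_sym qxn0 q0.
  by have := renyi_pow_tangent a1 (p0 x) qx_gt0 ler01; rewrite !powR1 !mul1r mulr1.
rewrite !ge0_integralD // ?ge0_integralZl_EFin //; last 2 first.
- by move=> x _; rewrite mule_ge0 ?lee_fin.
- by move=> x _; rewrite mule_ge0 ?lee_fin.
by rewrite ip iq mule1 leeD2rE.
Qed.

Lemma renyi_div_ge0 (a : R) (p q : T -> R) : (1 < a)%R ->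
  is_density mu p -> is_density mu q -> 0 <= renyi_div mu a p q.
Proof.
move=> a1 dp dq; rewrite /renyi_div; case: asboolP => [ac|_] //.
set I := \int[mu]_x _.
have I_ge1 : 1 <= I := integral_renyi_pow_ge1 a1 dp dq ac.
case: eqP => // /eqP Ioo.
have I_fin : I \is a fin_num by rewrite ge0_fin_numE ?integral_renyi_pow_ge0 // ltey.
rewrite lee_fin mulr_ge0 //; first by rewrite invr_ge0 subr_ge0 ltW.
by apply: ln_ge0; rewrite -lee_fin fineK.
Qed.

End renyi_div.

Section mixture.
Context (R : realType) (d2 dw : measure_display)
  (Z2 : measurableType d2) (W : measurableType dw)
  (mu2 : {sigma_finite_measure set Z2 -> \bar R})
  (nu : {sigma_finite_measure set W -> \bar R}).
Variable q : Z2 -> W -> R.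
Hypotheses (mq : measurable_fun setT (fun x : Z2 * W => q x.1 x.2))
  (q0 : forall z w, 0 <= q z w)
  (q1 : forall z, (\int[nu]_w (q z w)%:E = 1)%E).
Local Open Scope ereal_scope.

Definition mixture (h : Z2 -> R) (w : W) : \bar R := \int[mu2]_z (h z * q z w)%:E.

Lemma measurable_q_comp dx (X : measurableType dx) (hz : X -> Z2) (hw : X -> W) :
  measurable_fun setT hz -> measurable_fun setT hw ->
  measurable_fun setT (fun x => q (hz x) (hw x)).
Proof.
move=> mz mw.
exact: (measurableT_comp (f := fun y : Z2 * W => q y.1 y.2)
  (g := fun x => (hz x, hw x)) mq (measurable_fun_pair mz mw)).
Qed.

Lemma measurable_qz z : measurable_fun setT (q z).
Proof. by apply: measurable_q_comp => //; exact: measurable_cst. Qed.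

Lemma measurable_qw w : measurable_fun setT (q^~ w).
Proof. by apply: measurable_q_comp => //; exact: measurable_cst. Qed.

Section mass.
Variables (h : Z2 -> R) (mh : R).
Hypotheses (meas_h : measurable_fun setT h) (h0 : forall z, (0 <= h z)%R)
  (h_mass : \int[mu2]_z (h z)%:E = mh%:E).

Let mixture_integrand : (W * Z2) -> \bar R := fun x => (h x.2 * q x.2 x.1)%:E.

Let measurable_mixture_integrand : measurable_fun setT mixture_integrand.
Proof.
apply/measurable_EFinP; apply: measurable_funM.
  exact: (measurableT_comp meas_h measurable_snd).
by apply: measurable_q_comp; [exact: measurable_snd|exact: measurable_fst].
Qed.

Let mixture_integrand_ge0 x : 0 <= mixture_integrand x.
Proof. by rewrite lee_fin mulr_ge0. Qed.

Lemma mixture_ge0 w : 0 <= mixture h w.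
Proof. by apply: integral_ge0 => z _; rewrite lee_fin mulr_ge0. Qed.

Lemma measurable_mixture : measurable_fun setT (mixture h).
Proof.
exact: (measurable_fun_fubini_tonelli_F (m2 := mu2) _
  measurable_mixture_integrand mixture_integrand_ge0).
Qed.

Lemma integral_mixture : \int[nu]_w mixture h w = mh%:E.
Proof.
rewrite /mixture (fubini_tonelli mixture_integrand) //= /mixture_integrand -h_mass.
apply: eq_integral => z _ /=.
by rewrite ge0_integralZl_real ?q1 ?mule1 //; exact: measurable_qz.
Qed.

End mass.

Section jensen.
Variables (a K m m' : R) (f g : Z2 -> R).
Hypotheses (a1 : (1 < a)%R)
  (mf : measurable_fun setT f) (mg : measurable_fun setT g)
  (f0 : forall z, (0 <= f z)%R) (g0 : forall z, (0 <= g z)%R)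
  (m_gt0 : (0 < m)%R) (m'_gt0 : (0 < m')%R)
  (f_mass : \int[mu2]_z (f z)%:E = m%:E) (g_mass : \int[mu2]_z (g z)%:E = m'%:E)
  (K0 : (0 <= K)%R)
  (q_erenyi_le : forall z z', \int[nu]_w erenyi_pow a (q z w) (q z' w) <= K%:E).

Let a_gt0 : (0 < a)%R. Proof. exact: lt_trans ltr01 a1. Qed.

Let m_ge0 : (0 <= m)%R. Proof. exact: ltW. Qed.
Let m'_ge0 : (0 <= m')%R. Proof. exact: ltW. Qed.
Let a_ge0 : (0 <= a)%R. Proof. exact: ltW. Qed.

Let kscale : R := m' `^ (- a) * m `^ (a - 1).

Let kscale_ge0 : (0 <= kscale)%R. Proof. by rewrite mulr_ge0 ?powR_ge0. Qed.

Local Hint Resolve a_gt0 a_ge0 m_ge0 m'_ge0 kscale_ge0 : core.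

Definition cross_integrand (x : (W * Z2) * Z2) : \bar R :=
  (f x.1.2 * g x.2)%:E * erenyi_pow a (q x.1.2 x.1.1) (q x.2 x.1.1).

(* The average in Jensen's inequality for the product weights [f z * g z']. *)
Definition cross_integral (w : W) : \bar R :=
  \int[mu2]_z \int[mu2]_z' cross_integrand ((w, z), z').

Lemma cross_integrand_ge0 x : 0 <= cross_integrand x.
Proof. by rewrite mule_ge0 ?erenyi_pow_ge0 // lee_fin mulr_ge0. Qed.

Lemma cross_integral_ge0 w : 0 <= cross_integral w.
Proof.
by apply: integral_ge0 => z _; apply: integral_ge0 => z' _; exact: cross_integrand_ge0.
Qed.

Lemma measurable_cross_integrand : measurable_fun setT cross_integrand.
Proof.
apply: emeasurable_funM.
  apply/measurable_EFinP; apply: measurable_funM.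
    exact: (measurableT_comp mf (measurableT_comp measurable_snd measurable_fst)).
  exact: (measurableT_comp mg measurable_snd).
apply: measurable_erenyi_pow; apply: measurable_q_comp.
- exact: (measurableT_comp measurable_snd measurable_fst).
- exact: (measurableT_comp measurable_fst measurable_fst).
- exact: measurable_snd.
- exact: (measurableT_comp measurable_fst measurable_fst).
Qed.

Lemma measurable_cross_integrand_w w :
  measurable_fun setT (fun zz : Z2 * Z2 => cross_integrand ((w, zz.1), zz.2)).
Proof.
apply: (measurableT_comp (f := cross_integrand) measurable_cross_integrand).
apply: measurable_fun_pair; last exact: measurable_snd.
by apply: measurable_fun_pair; [exact: measurable_cst|exact: measurable_fst].
Qed.

Lemma measurable_cross_row w :
  measurable_fun setT (fun z => \int[mu2]_z' cross_integrand ((w, z), z')).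
Proof.
exact: (measurable_fun_fubini_tonelli_F (m2 := mu2) _
  (measurable_cross_integrand_w w) (fun _ => cross_integrand_ge0 _)).
Qed.

Lemma measurable_cross_integral : measurable_fun setT cross_integral.
Proof.
have F0 x : 0 <= fubini_F mu2 cross_integrand x.
  by apply: integral_ge0 => y _; exact: cross_integrand_ge0.
apply: (measurable_fun_fubini_tonelli_F (m2 := mu2) _ _ F0).
exact: measurable_fun_fubini_tonelli_F measurable_cross_integrand cross_integrand_ge0.
Qed.

(* [erenyi_pow_tangent] at [(q z w, q z' w)], weighted by [f z * g z'] and
   integrated in [z']. *)
Lemma mixture_tangent_row w z c : (0 <= c)%R -> mixture g w \is a fin_num ->
  ((f z * (c `^ a / m) * fine (mixture g w)
    + f z * (a * c `^ (a - 1) / m') * q z w * m')%:E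
   <= kscale%:E * \int[mu2]_z' cross_integrand ((w, z), z')
      + (f z * (a * c `^ a / m) * fine (mixture g w))%:E).
Proof.
move=> c0 Q_fin; set Q := fine (mixture g w).
have eQ : mixture g w = Q%:E by rewrite fineK.
have A0 : (0 <= f z * (c `^ a / m))%R by rewrite mulr_ge0 ?divr_ge0 ?powR_ge0.
have B0 : (0 <= f z * (a * c `^ (a - 1) / m') * q z w)%R.
  by rewrite !mulr_ge0 ?invr_ge0 ?powR_ge0.
have C0 : (0 <= f z * (a * c `^ a / m))%R by rewrite !mulr_ge0 ?invr_ge0 ?powR_ge0.
have mgq : measurable_fun setT (fun z' => g z' * q z' w)%R.
  by apply: measurable_funM => //; exact: measurable_qw.
have gq0 z' : (0 <= g z' * q z' w)%R by rewrite mulr_ge0.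
have mrow : measurable_fun setT (fun z' => cross_integrand ((w, z), z')).
  exact: measurable_fun_pair2 z (measurable_cross_integrand_w w).
rewrite -[X in X <= _](_ : \int[mu2]_z'
    ((f z * (c `^ a / m)) * (g z' * q z' w)
     + (f z * (a * c `^ (a - 1) / m') * q z w) * g z')%:E = _); last first.
  by rewrite ge0_integral_lincomb // -/(mixture g w) eQ g_mass -!EFinM -EFinD.
rewrite -[X in _ <= X](_ : \int[mu2]_z' (kscale%:E * cross_integrand ((w, z), z') +
    ((f z * (a * c `^ a / m)) * (g z' * q z' w))%:E) = _); last first.
  rewrite ge0_integralD //; last 4 first.
  - by move=> z' _; rewrite mule_ge0 ?cross_integrand_ge0 // lee_fin.
  - by apply: emeasurable_funM => //; exact: measurable_cst.
  - by move=> z' _; rewrite lee_fin mulr_ge0.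
  - by apply/measurable_EFinP; apply: measurable_funM => //; exact: measurable_cst.
  rewrite ge0_integralZl_EFin //; last by move=> z' _; exact: cross_integrand_ge0.
  by rewrite ge0_integralZl_real // -/(mixture g w) eQ -EFinM.
apply: ge0_le_integral => //.
- by move=> z' _; rewrite lee_fin addr_ge0 // mulr_ge0.
- apply/measurable_EFinP; apply: measurable_funD;
    by apply: measurable_funM => //; exact: measurable_cst.
- apply: emeasurable_funD; first by apply: emeasurable_funM => //; exact: measurable_cst.
  by apply/measurable_EFinP; apply: measurable_funM => //; exact: measurable_cst.
move=> z' _.
have fg0 : 0 <= (f z * g z')%:E by rewrite lee_fin mulr_ge0.
have := lee_wpmul2l fg0 (erenyi_pow_tangent a1 (q0 z w) (q0 z' w) c0 m_gt0 m'_gt0).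
rewrite ge0_muleDr; last 2 first.
- by rewrite mule_ge0 ?erenyi_pow_ge0 // lee_fin.
- by rewrite lee_fin mulr_ge0 ?divr_ge0 // mulr_ge0 ?powR_ge0.
rewrite muleCA -/kscale -!EFinM /cross_integrand /=.
congr (_%:E <= _ + _%:E); ring.
Qed.

Lemma mixture_tangent w c : (0 <= c)%R ->
  mixture f w \is a fin_num -> mixture g w \is a fin_num ->
  ((c `^ a * fine (mixture g w) + a * c `^ (a - 1) * fine (mixture f w))%:E
   <= kscale%:E * cross_integral w + (a * c `^ a * fine (mixture g w))%:E).
Proof.
move=> c0 P_fin Q_fin.
set Q := fine (mixture g w); set P := fine (mixture f w).
have Q0 : (0 <= Q)%R by rewrite fine_ge0 ?mixture_ge0.
have eP : mixture f w = P%:E by rewrite fineK.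
have mfq : measurable_fun setT (fun z => f z * q z w)%R.
  by apply: measurable_funM => //; exact: measurable_qw.
have fq0 z : (0 <= f z * q z w)%R by rewrite mulr_ge0.
have r10 : (0 <= c `^ a / m * Q)%R by rewrite !mulr_ge0 ?powR_ge0 ?invr_ge0.
have r20 : (0 <= a * c `^ (a - 1) / m' * m')%R by rewrite !mulr_ge0 ?powR_ge0 ?invr_ge0.
have r30 : (0 <= a * c `^ a / m * Q)%R by rewrite !mulr_ge0 ?powR_ge0 ?invr_ge0.
have row0 z : 0 <= \int[mu2]_z' cross_integrand ((w, z), z').
  by apply: integral_ge0 => z' _; exact: cross_integrand_ge0.
rewrite -[X in X <= _](_ : \int[mu2]_z
    ((c `^ a / m * Q) * f z + (a * c `^ (a - 1) / m' * m') * (f z * q z w))%:E = _);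
    last first.
  rewrite ge0_integral_lincomb // f_mass -/(mixture f w) eP -!EFinM -EFinD.
  by congr (_%:E); field; rewrite !gt_eqF.
rewrite -[X in _ <= X](_ : \int[mu2]_z
    (kscale%:E * \int[mu2]_z' cross_integrand ((w, z), z')
    + ((a * c `^ a / m * Q) * f z)%:E) = _); last first.
  rewrite ge0_integralD //; last 4 first.
  - by move=> z _; rewrite mule_ge0 ?lee_fin.
  - by apply: emeasurable_funM; [exact: measurable_cst|exact: measurable_cross_row].
  - by move=> z _; rewrite lee_fin mulr_ge0.
  - by apply/measurable_EFinP; apply: measurable_funM => //; exact: measurable_cst.
  rewrite ge0_integralZl_EFin //; last exact: measurable_cross_row.
  rewrite ge0_integralZl_real // f_mass -EFinM.
  by congr (_ + _%:E); field; rewrite gt_eqF.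
apply: ge0_le_integral => //.
- by move=> z _; rewrite lee_fin addr_ge0 // mulr_ge0.
- apply/measurable_EFinP; apply: measurable_funD;
    by apply: measurable_funM => //; exact: measurable_cst.
- apply: emeasurable_funD.
    by apply: emeasurable_funM; [exact: measurable_cst|exact: measurable_cross_row].
  by apply/measurable_EFinP; apply: measurable_funM => //; exact: measurable_cst.
move=> z _; have := mixture_tangent_row z c0 Q_fin.
by rewrite -/Q; congr (_%:E <= _ + _%:E); ring.
Qed.

(* Jensen's inequality for the jointly convex [renyi_pow a], proved through the
   supporting line [mixture_tangent] at the ratio [c = P / Q]. *)
Lemma renyi_pow_mixture_le w :
  (renyi_pow a (fine (mixture f w)) (fine (mixture g w)))%:E
  <= kscale%:E * cross_integral w.
Proof.
have fine_nonfin (x : \bar R) : 0 <= x -> x \isn't a fin_num -> fine x = 0%R.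
  by case: x.
have [P_fin|P_nfin] := boolP (mixture f w \is a fin_num); last first.
  by rewrite (fine_nonfin _ (mixture_ge0 f0 w) P_nfin) renyi_pow0l ?gt_eqF //
    mule_ge0 ?cross_integral_ge0.
have [Q_fin|Q_nfin] := boolP (mixture g w \is a fin_num); last first.
  by rewrite (fine_nonfin _ (mixture_ge0 g0 w) Q_nfin) renyi_pow0r ?gt_eqF //
    mule_ge0 ?cross_integral_ge0.
set P := fine (mixture f w); set Q := fine (mixture g w).
have P0 : (0 <= P)%R by rewrite fine_ge0 ?mixture_ge0.
have Q0 : (0 <= Q)%R by rewrite fine_ge0 ?mixture_ge0.
have [->|Qn0] := eqVneq Q 0%R.
  by rewrite renyi_pow0r ?gt_eqF // mule_ge0 ?cross_integral_ge0.
have Q_gt0 : (0 < Q)%R by rewrite lt_neqAle eq_sym Qn0.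
set c := (P / Q)%R; have c0 : (0 <= c)%R by rewrite divr_ge0.
have cP : (c `^ (a - 1) * P = c `^ a * Q)%R.
  have -> : P = (c * Q)%R by rewrite /c divfK.
  by rewrite mulrA (mulrC (c `^ (a - 1))%R) mulr_powRB1.
have := mixture_tangent c0 P_fin Q_fin.
rewrite -/P -/Q -mulrA cP renyi_powE // -/c.
have [Y_fin|Y_nfin] := boolP (kscale%:E * cross_integral w \is a fin_num); last first.
  move=> _; move: Y_nfin; rewrite ge0_fin_numE ?mule_ge0 ?cross_integral_ge0 //.
  by rewrite ltey negbK => /eqP ->; exact: leey.
rewrite -(fineK Y_fin) -EFinD !lee_fin.
move: (fine _) => y; move: (c `^ a)%R => C; nra.
Qed.

(* Taking [c] large in [mixture_tangent] rules out [Q = 0 < P] when the cross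
   integral is finite. *)
Lemma mixture_ac_point w :
  mixture f w \is a fin_num -> mixture g w \is a fin_num ->
  cross_integral w \is a fin_num ->
  fine (mixture g w) = 0%R -> fine (mixture f w) = 0%R.
Proof.
move=> P_fin Q_fin X_fin Q0; set P := fine (mixture f w).
have P0 : (0 <= P)%R by rewrite fine_ge0 ?mixture_ge0.
apply/eqP; apply: contraT => Pn0.
have P_gt0 : (0 < P)%R by rewrite lt_neqAle eq_sym Pn0.
set r := fine (cross_integral w).
have r0 : (0 <= r)%R by rewrite fine_ge0 ?cross_integral_ge0.
set X := ((kscale * r + 1) / (a * P))%R.
have X_gt0 : (0 < X)%R.
  by rewrite divr_gt0 ?mulr_gt0 // ltr_wpDl // mulr_ge0.
set c := (X `^ (a - 1)^-1)%R.
have := mixture_tangent (powR_ge0 X (a - 1)^-1) P_fin Q_fin.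
have -> : (c `^ (a - 1) = X)%R.
  by rewrite /c -powRrM mulVf ?gt_eqF ?subr_gt0 // powRr1 // ltW.
rewrite Q0 -(fineK X_fin) -/r !mulr0 add0r addr0 -EFinM lee_fin.
have -> : (a * X * P = kscale * r + 1)%R by rewrite /X; field; rewrite Pn0 gt_eqF.
lra.
Qed.

Lemma integral_cross_integral_le : \int[nu]_w cross_integral w <= (K * m * m')%:E.
Proof.
have F0 x : 0 <= fubini_F mu2 cross_integrand x.
  by apply: integral_ge0 => y _; exact: cross_integrand_ge0.
have mF := measurable_fun_fubini_tonelli_F (m2 := mu2) _
  measurable_cross_integrand cross_integrand_ge0.
have fKg0 z z' : (0 <= f z * K * g z')%R by rewrite !mulr_ge0.
have mfKg : measurable_fun setT (fun x : Z2 * Z2 => (f x.1 * K * g x.2)%:E).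
  apply/measurable_EFinP; apply: measurable_funM.
    by apply: measurable_funM; [exact: measurableT_comp|exact: measurable_cst].
  exact: measurableT_comp.
have -> : (K * m * m')%:E = \int[mu2]_z \int[mu2]_z' (f z * K * g z')%:E.
  rewrite (eq_integral (fun z => ((K * m') * f z)%:E)); last first.
    move=> z _; rewrite ge0_integralZl_real ?mulr_ge0 // g_mass -EFinM.
    by congr (_%:E); ring.
  by rewrite ge0_integralZl_real ?mulr_ge0 // f_mass -EFinM; congr (_%:E); ring.
(* Tonelli twice, so as to integrate in [w] first. *)
rewrite (fubini_tonelli (fubini_F mu2 cross_integrand) mF F0).
apply: ge0_le_integral => //.
- by move=> z _; apply: integral_ge0 => w _; exact: F0.
- exact: (measurable_fun_fubini_tonelli_G (m1 := nu) _ mF F0).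
- apply: (measurable_fun_fubini_tonelli_F (m2 := mu2) _ mfKg) => x.
  by rewrite lee_fin fKg0.
move=> z _.
have mGz : measurable_fun setT (fun x : W * Z2 => cross_integrand ((x.1, z), x.2)).
  apply: (measurableT_comp (f := cross_integrand) measurable_cross_integrand).
  apply: measurable_fun_pair; last exact: measurable_snd.
  by apply: measurable_fun_pair; [exact: measurable_fst|exact: measurable_cst].
rewrite (fubini_tonelli (fun x : W * Z2 => cross_integrand ((x.1, z), x.2)) mGz
  (fun _ => cross_integrand_ge0 _)) /=.
apply: ge0_le_integral => //.
- by move=> z' _; apply: integral_ge0 => w _; exact: cross_integrand_ge0.
- exact: (measurable_fun_fubini_tonelli_G (m1 := nu) _ mGz
    (fun _ => cross_integrand_ge0 _)).
- by apply/measurable_EFinP; apply: measurable_funM.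
move=> z' _; rewrite /cross_integrand /= ge0_integralZl //; last 3 first.
- by apply: measurable_erenyi_pow; exact: measurable_qz.
- by move=> w _; exact: erenyi_pow_ge0.
- by rewrite lee_fin mulr_ge0.
have -> : (f z * K * g z' = (f z * g z') * K)%R by ring.
by rewrite EFinM; apply: lee_wpmul2l (q_erenyi_le z z'); rewrite lee_fin mulr_ge0.
Qed.

Lemma integral_renyi_pow_mixture_le :
  \int[nu]_w (renyi_pow a (fine (mixture f w)) (fine (mixture g w)))%:E
  <= (K * renyi_pow a m m')%:E.
Proof.
have mP := measurableT_comp (fine_measurable measurableT) (measurable_mixture mf f0).
have mQ := measurableT_comp (fine_measurable measurableT) (measurable_mixture mg g0).
apply: (@le_trans _ _ (\int[nu]_w (kscale%:E * cross_integral w))).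
  apply: ge0_le_integral => //.
  - by move=> w _; rewrite lee_fin renyi_pow_ge0.
  - by apply/measurable_EFinP; exact: measurable_renyi_pow.
  - by apply: emeasurable_funM; [exact: measurable_cst|exact: measurable_cross_integral].
  by move=> w _; exact: renyi_pow_mixture_le.
rewrite ge0_integralZl_EFin //; first last.
- exact: measurable_cross_integral.
- by move=> w _; exact: cross_integral_ge0.
apply: le_trans (lee_wpmul2l _ integral_cross_integral_le) _; first by rewrite lee_fin.
rewrite -EFinM lee_fin le_eqVlt; apply/orP; left; apply/eqP.
rewrite /kscale /renyi_pow -(mulr_powRB1 m_ge0 a_gt0).
have <- : (m' * m' `^ (- a) = m' `^ (1 - a))%R.
  by rewrite powRD ?powRr1 //; apply/implyP => _; rewrite gt_eqF.
ring.
Qed.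

(* [mixture f], [mixture g] and [cross_integral] have finite [nu]-integrals,
   hence are finite almost everywhere. *)
Lemma mixture_ac :
  {ae nu, forall w, fine (mixture g w) = 0%R -> fine (mixture f w) = 0%R}.
Proof.
have P_fin : {ae nu, forall w, mixture f w \is a fin_num}.
  apply: (ae_fin_num_integral_le (r := m) (measurable_mixture mf f0) (mixture_ge0 f0)).
  by rewrite (integral_mixture mf f0 f_mass).
have Q_fin : {ae nu, forall w, mixture g w \is a fin_num}.
  apply: (ae_fin_num_integral_le (r := m') (measurable_mixture mg g0) (mixture_ge0 g0)).
  by rewrite (integral_mixture mg g0 g_mass).
have X_fin := ae_fin_num_integral_le measurable_cross_integral cross_integral_ge0
  integral_cross_integral_le.
by apply: filterS3 P_fin Q_fin X_fin => w; exact: mixture_ac_point.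
Qed.

End jensen.
End mixture.

Section marginal.
Context (R : realType) (d1 d2 : measure_display)
  (Z1 : measurableType d1) (Z2 : measurableType d2)
  (mu1 : {sigma_finite_measure set Z1 -> \bar R})
  (mu2 : {sigma_finite_measure set Z2 -> \bar R}).
Variable p : Z1 * Z2 -> R.
Hypothesis p_density : is_density (mu1 \x mu2)%E p.
Local Open Scope ereal_scope.

Definition emarginal1 (z1 : Z1) : \bar R := \int[mu2]_z2 (p (z1, z2))%:E.

Let measurable_Ep : measurable_fun setT (fun x => (p x)%:E).
Proof. by case: p_density => mp _ _; exact/measurable_EFinP. Qed.

Let Ep_ge0 x : 0 <= (p x)%:E.
Proof. by case: p_density => _ p0 _; rewrite lee_fin. Qed.

Lemma measurable_emarginal1 : measurable_fun setT emarginal1.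
Proof. exact: (measurable_fun_fubini_tonelli_F (m2 := mu2) _ measurable_Ep Ep_ge0). Qed.

Lemma emarginal1_ge0 z1 : 0 <= emarginal1 z1.
Proof. by apply: integral_ge0 => z _; exact: Ep_ge0. Qed.

Lemma integral_emarginal1 : \int[mu1]_z1 emarginal1 z1 = 1.
Proof.
by case: p_density => _ _ <-; rewrite (fubini_tonelli1 _ measurable_Ep Ep_ge0).
Qed.

Lemma ae_emarginal1_fin_num : {ae mu1, forall z1, emarginal1 z1 \is a fin_num}.
Proof.
apply: (ae_fin_num_integral_le (r := 1%R) measurable_emarginal1 emarginal1_ge0).
by rewrite integral_emarginal1.
Qed.

Lemma marginal1_density : is_density mu1 (fun z1 => fine (emarginal1 z1)).
Proof.
have mfine := measurableT_comp (fine_measurable measurableT) measurable_emarginal1.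
split => //; first by move=> z1; rewrite fine_ge0 ?emarginal1_ge0.
rewrite -integral_emarginal1; apply: ae_eq_integral => //.
- exact/measurable_EFinP.
- exact: measurable_emarginal1.
by apply: filterS ae_emarginal1_fin_num => z1 z1_fin _; rewrite fineK.
Qed.

End marginal.

Section composition.
Context (R : realType) (Dat : Type) (d1 d2 dw : measure_display)
  (Z1 : measurableType d1) (Z2 : measurableType d2) (W : measurableType dw)
  (mu1 : {sigma_finite_measure set Z1 -> \bar R})
  (mu2 : {sigma_finite_measure set Z2 -> \bar R})
  (nu : {sigma_finite_measure set W -> \bar R}).
Variables (a K : R) (pA : Dat -> Z1 * Z2 -> R) (qB : Z1 -> Z2 -> W -> R).
Hypotheses (a1 : 1 < a) (pA_density : forall D, is_density (mu1 \x mu2)%E (pA D))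
  (mqB : measurable_fun setT (fun x : (Z1 * Z2) * W => qB x.1.1 x.1.2 x.2))
  (qB_density : forall z1 z2, is_density nu (qB z1 z2)) (K0 : 0 <= K)
  (qB_erenyi_le : forall z1 z z',
    (\int[nu]_w erenyi_pow a (qB z1 z w) (qB z1 z' w) <= K%:E)%E).
Local Open Scope ereal_scope.

Let a_neq0 : a != 0%R. Proof. by rewrite gt_eqF // (lt_trans ltr01). Qed.

Local Hint Resolve a_neq0 : core.

Let qB_ge0 z1 z w : (0 <= qB z1 z w)%R. Proof. by case: (qB_density z1 z). Qed.

Lemma measurable_qB_comp dx (X : measurableType dx)
    (h1 : X -> Z1) (h2 : X -> Z2) (hw : X -> W) :
  measurable_fun setT h1 -> measurable_fun setT h2 -> measurable_fun setT hw ->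
  measurable_fun setT (fun x => qB (h1 x) (h2 x) (hw x)).
Proof.
move=> m1 m2 mw.
exact: (measurableT_comp (f := fun y : (Z1 * Z2) * W => qB y.1.1 y.1.2 y.2)
  (g := fun x => ((h1 x, h2 x), hw x)) mqB
  (measurable_fun_pair (measurable_fun_pair m1 m2) mw)).
Qed.

Lemma measurable_out_density D : measurable_fun setT (out_density mu2 pA qB D).
Proof.
have [mp p0 _] := pA_density D.
apply: (measurableT_comp (fine_measurable measurableT)).
apply: (measurable_fun_fubini_tonelli_F (m2 := mu2)
  (fun x : (Z1 * W) * Z2 => (pA D (x.1.1, x.2) * qB x.1.1 x.2 x.1.2)%:E)).
  apply/measurable_EFinP; apply: measurable_funM.
    apply: (measurableT_comp mp); apply: measurable_fun_pair => //.
    exact: measurableT_comp.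
  by apply: measurable_qB_comp => //; exact: measurableT_comp.
by move=> x; rewrite lee_fin mulr_ge0.
Qed.

Variables (D D' : Dat).

Lemma out_density_fiber z1 :
  (marginal1 mu2 pA D' z1 = 0 -> marginal1 mu2 pA D z1 = 0)%R ->
  emarginal1 mu2 (pA D) z1 \is a fin_num -> emarginal1 mu2 (pA D') z1 \is a fin_num ->
  \int[nu]_w (renyi_pow a (out_density mu2 pA qB D (z1, w))
                         (out_density mu2 pA qB D' (z1, w)))%:E
    <= (K * renyi_pow a (marginal1 mu2 pA D z1) (marginal1 mu2 pA D' z1))%:E /\
  {ae nu, forall w, out_density mu2 pA qB D' (z1, w) = 0%R ->
                    out_density mu2 pA qB D (z1, w) = 0%R}.
Proof.
rewrite /marginal1 -/(emarginal1 _ _ z1) -/(emarginal1 _ _ z1) => ac M_fin M'_fin.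
set M := emarginal1 mu2 (pA D) z1 in ac M_fin *.
set M' := emarginal1 mu2 (pA D') z1 in ac M'_fin *.
have [mp p0 _] := pA_density D; have [mp' p0' _] := pA_density D'.
have mf : measurable_fun setT (fun z => pA D (z1, z)) by exact: measurable_fun_pair2.
have mg : measurable_fun setT (fun z => pA D' (z1, z)) by exact: measurable_fun_pair2.
have mq : measurable_fun setT (fun x : Z2 * W => qB z1 x.1 x.2).
  by apply: measurable_qB_comp => //; exact: measurable_cst.
have q1 z : \int[nu]_w (qB z1 z w)%:E = 1 by case: (qB_density z1 z).
have [M0|Mn0] := eqVneq (fine M) 0%R.
  have M_eq0 : M = 0 by rewrite -(fineK M_fin) M0.
  have P0 w : out_density mu2 pA qB D (z1, w) = 0%R.
    by rewrite /out_density /=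
      (ge0_integral_eq0_mul mf (measurable_fun_pair1 w mq) (fun z => p0 _) M_eq0).
  split; last by apply: aeW => w _; exact: P0.
  rewrite M0 renyi_pow0l // mulr0 (eq_integral (cst 0)) ?integral0 //.
  by move=> w _; rewrite P0 renyi_pow0l.
have M_gt0 : (0 < fine M)%R.
  by rewrite lt_neqAle eq_sym Mn0 fine_ge0 // (emarginal1_ge0 (pA_density D)).
have M'_gt0 : (0 < fine M')%R.
  rewrite lt_neqAle fine_ge0 ?(emarginal1_ge0 (pA_density D')) // andbT eq_sym.
  by apply: contra Mn0 => /eqP/ac ->.
have mass : \int[mu2]_z (pA D (z1, z))%:E = (fine M)%:E by rewrite fineK.
have mass' : \int[mu2]_z (pA D' (z1, z))%:E = (fine M')%:E by rewrite fineK.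
split.
  exact: (integral_renyi_pow_mixture_le mq (qB_ge0 z1) a1 mf mg (fun z => p0 _)
    (fun z => p0' _) M_gt0 M'_gt0 mass mass' K0 (qB_erenyi_le z1)).
exact: (mixture_ac mq (qB_ge0 z1) q1 a1 mf mg (fun z => p0 _) (fun z => p0' _)
  M_gt0 M'_gt0 mass mass' K0 (qB_erenyi_le z1)).
Qed.

Hypothesis marginal1_ac :
  {ae mu1, forall z1, marginal1 mu2 pA D' z1 = 0%R -> marginal1 mu2 pA D z1 = 0%R}.

Let P := out_density mu2 pA qB D.
Let Q := out_density mu2 pA qB D'.

Let ae_out_density_fiber : {ae mu1, forall z1,
  \int[nu]_w (renyi_pow a (P (z1, w)) (Q (z1, w)))%:E
    <= (K * renyi_pow a (marginal1 mu2 pA D z1) (marginal1 mu2 pA D' z1))%:E /\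
  {ae nu, forall w, Q (z1, w) = 0%R -> P (z1, w) = 0%R}}.
Proof.
apply: filterS3 marginal1_ac (ae_emarginal1_fin_num (pA_density D))
  (ae_emarginal1_fin_num (pA_density D')) => z1.
exact: out_density_fiber.
Qed.

Lemma integral_renyi_pow_out_density_le :
  \int[mu1 \x nu]_zw (renyi_pow a (P zw) (Q zw))%:E <=
  K%:E * \int[mu1]_z1 (renyi_pow a (marginal1 mu2 pA D z1) (marginal1 mu2 pA D' z1))%:E.
Proof.
have F0 zw : 0 <= (renyi_pow a (P zw) (Q zw))%:E by rewrite lee_fin renyi_pow_ge0.
have mF : measurable_fun setT (fun zw => (renyi_pow a (P zw) (Q zw))%:E).
  by apply/measurable_EFinP; apply: measurable_renyi_pow; exact: measurable_out_density.
have mM := measurableT_comp (fine_measurable measurableT)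
  (measurable_emarginal1 (pA_density D)).
have mM' := measurableT_comp (fine_measurable measurableT)
  (measurable_emarginal1 (pA_density D')).
rewrite (fubini_tonelli1 _ mF F0) -ge0_integralZl_real //; last first.
- by move=> z1; exact: renyi_pow_ge0.
- exact: measurable_renyi_pow.
apply: ae_ge0_le_integral => //.
- by move=> z1 _; apply: integral_ge0 => w _; exact: F0.
- exact: (measurable_fun_fubini_tonelli_F (m2 := nu) _ mF F0).
- by move=> z1 _; rewrite lee_fin mulr_ge0 ?renyi_pow_ge0.
- by apply/measurable_EFinP; apply: measurable_funM; [exact: measurable_cst|
    exact: measurable_renyi_pow].
by apply: filterS ae_out_density_fiber => z1 [fiber_le _] _.
Qed.

Lemma out_density_ac : {ae mu1 \x nu, forall zw, Q zw = 0%R -> P zw = 0%R}.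
Proof.
set N := [set zw | Q zw = 0%R /\ P zw <> 0%R].
have mN : measurable N.
  have -> : N = setT `&` (fun zw => (Q zw == 0%R) && (P zw != 0%R)) @^-1` [set true].
    apply/seteqP; split => zw /=.
      by move=> [Q0 Pn0]; split => //; rewrite Q0 eqxx; apply/eqP.
    by move=> [_ /andP[/eqP Q0 /eqP Pn0]].
  have mQ0 : measurable_fun setT (fun zw => Q zw == 0%R).
    by apply: measurable_fun_eqr; [exact: measurable_out_density|exact: measurable_cst].
  have mP0 : measurable_fun setT (fun zw => P zw == 0%R).
    by apply: measurable_fun_eqr; [exact: measurable_out_density|exact: measurable_cst].
  exact: (measurable_and mQ0 (measurable_neg mP0)).
exists N; split => //; last by move=> zw /= /not_implyP.
apply/eqP; rewrite eq_le measure_ge0 andbT.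
apply: (@le_trans _ _ (\int[mu1]_z1 cst 0 z1)); last by rewrite integral0.
have sec0 z1 : setT z1 -> 0 <= (nu \o xsection N) z1 by move=> _; exact: measure_ge0.
have msec := measurable_fun_xsection nu mN.
apply: ae_ge0_le_integral => //.
apply: filterS ae_out_density_fiber => z1 [_ [N' [mN' N'0 N'N]]] _ /=.
rewrite -N'0; apply: le_measure; rewrite ?inE //; first exact: measurable_xsection.
by move=> w; rewrite /xsection /= inE => -[Q0 Pn0]; apply: N'N => /(_ Q0).
Qed.

End composition.

Theorem theoremB1 (R : realType) (Dat : Type) (adj : Dat -> Dat -> Prop)
  (d1 d2 dw : measure_display)
  (Z1 : measurableType d1) (Z2 : measurableType d2) (W : measurableType dw)
  (mu1 : {sigma_finite_measure set Z1 -> \bar R})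
  (mu2 : {sigma_finite_measure set Z2 -> \bar R})
  (nu : {sigma_finite_measure set W -> \bar R})
  (alpha eps1 eps2 : R)
  (pA : Dat -> Z1 * Z2 -> R) (qB : Z1 -> Z2 -> W -> R) :
  (forall D D', adj D D' -> adj D' D) ->
  1 < alpha ->
  (forall D, is_density (mu1 \x mu2)%E (pA D)) ->
  measurable_fun setT (fun x : (Z1 * Z2) * W => qB x.1.1 x.1.2 x.2) ->
  (forall z1 z2, is_density nu (qB z1 z2)) ->
  (forall D D', adj D D' ->
     (renyi_div mu1 alpha (marginal1 mu2 pA D) (marginal1 mu2 pA D')
        <= eps1%:E)%E) ->
  (forall z1 z2 z2',
     (renyi_div nu alpha (qB z1 z2) (qB z1 z2') <= eps2%:E)%E) ->
  forall D D', adj D D' ->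
    (renyi_div (mu1 \x nu)%E alpha (out_density mu2 pA qB D)
                                   (out_density mu2 pA qB D')
       <= (eps1 + eps2)%:E)%E.
Proof.
move=> _ a1 pA_density mqB qB_density marginal1_le qB_le D D' adjDD'.
have [[z1 z2]] := density_inhabited (pA_density D).
have eps1_ge0 : 0 <= eps1.
  rewrite -lee_fin; apply: le_trans (marginal1_le D D' adjDD').
  exact: renyi_div_ge0 a1 (marginal1_density (pA_density D))
    (marginal1_density (pA_density D')).
have eps2_ge0 : 0 <= eps2.
  rewrite -lee_fin; apply: le_trans (qB_le z1 z2 z2).
  exact: renyi_div_ge0 a1 (qB_density z1 z2) (qB_density z1 z2).
have [marginal1_ac marginal1_int_le] := renyi_div_le_expR a1 (marginal1_le D D' adjDD').
have mqB' z1' z : measurable_fun setT (fun w => qB z1' z w).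
  by apply: measurable_qB_comp => //; exact: measurable_cst.
have qB_erenyi_le z1' z z' :=
  integral_erenyi_pow_le a1 (mqB' z1' z) (mqB' z1' z') (qB_le z1' z z').
apply: le_renyi_div => //; first exact: addr_ge0.
  by have := out_density_ac a1 pA_density mqB qB_density (expR_ge0 _) qB_erenyi_le
    marginal1_ac.
apply: le_trans (integral_renyi_pow_out_density_le a1 pA_density mqB qB_density
  (expR_ge0 _) qB_erenyi_le marginal1_ac) _.
rewrite mulrDr (addrC ((alpha - 1) * eps1)) expRD EFinM.
by apply: lee_wpmul2l; [rewrite lee_fin expR_ge0|exact: marginal1_int_le].
Qed.
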